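(* Consider the uncertain system \[ \dot x = f(x) + g(x)u + \varphi(x,u)\theta,\qquad \varphi(x,u)=[F(x)\;\; G(x)\,\mathrm{diag}(u)]\in\mathbb{R}^{n\times(p+m)}, \] with input $u\in\mathcal{U}\subseteq\mathbb{R}^m$, known locally Lipschitz $f,g$, known $F:\mathbb{R}^n\to\mathbb{R}^{n\times p}$, $G:\mathbb{R}^n\to\mathbb{R}^{n\times m}$, and unknown $\theta\in\mathbb{R}^{p+m}$ lying in a known hyperrectangle $\Theta=[\underline{\theta}_1,\overline{\theta}_1]\times\cdots\times[\underline{\theta}_{p+m},\overline{\theta}_{p+m}]$. Let $\{\Xi_k\}_{k\ge0}$ be the sequence of parameter sets generated by the integral set-membership identification scheme described below. Let $h:\mathbb{R}^n\to\mathbb{R}$ be continuously differentiable, $\mathcal{C}=\{x:h(x)\ge0\}$, and suppose there is an extended class $\mathcal{K}$ function $\alpha$ such that for all $x\in\mathcal{C}$ \[ \sup_{u\in\mathcal{U}}\inf_{\theta\in\Theta}\dot h(x,u,\theta)\ge-\alpha(h(x)),\qquad \dot h(x,u,\theta)=L_fh(x)+L_gh(x)u+L_\varphi h(x,u)\theta. \] Then $\sup_{u\in\mathcal{U}}\inf_{\theta\in\Xi_k}\dot h(x,u,\theta)\ge-\alpha(h(x))$ for all $x\in\mathcal{C}$ and all $k\in\mathbb{Z}_{\ge0}$.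
   Context: $L_fh=\nabla h\, f$, $L_gh=\nabla h\, g$, $L_\varphi h(x,u)=\nabla h(x)\varphi(x,u)$. Extended class $\mathcal{K}$: continuous strictly increasing $\alpha:\mathbb{R}\to\mathbb{R}$ with $\alpha(0)=0$. The identification scheme: let $x(\cdot)$ be a solution under an input signal $u(\cdot)$; fix $\Delta t>0$ and for $t\ge\Delta t$ let $\Delta x(t)=\int_{t-\Delta t}^t\dot x\,ds$, $\mathcal{F}(t)=\int_{t-\Delta t}^t f(x(s))ds$, $\mathcal{G}(t)=\int_{t-\Delta t}^t g(x(s))u(s)ds$, $\mathcal{S}(t)=\int_{t-\Delta t}^t\varphi(x(s),u(s))ds$. Let $\{t_k\}$ be strictly increasing with $t_0=0$; at time $t$ a history stack $\{\Delta x_j(t),\mathcal{F}_j(t),\mathcal{G}_j(t),\mathcal{S}_j(t)\}_{j\in\mathcal{M}(t)}$ consists of values of $(\Delta x,\mathcal{F},\mathcal{G},\mathcal{S})$ recorded at times in $[\Delta t,t]$. With $\varepsilon>0$, $\Xi_0=\Theta$, and for $k\ge1$, $\Xi_k=\prod_i[\underline\theta_i^k,\overline\theta_i^k]$ where $\underline\theta_i^k$ (resp. $\overline\theta_i^k$) is the minimum (resp. maximum) of $\theta_i$ over $\theta\in\Xi_{k-1}$ satisfying $-\varepsilon\mathbf{1}_n\le\Delta x_j(t_k)-\mathcal{F}_j(t_k)-\mathcal{G}_j(t_k)-\mathcal{S}_j(t_k)\theta\le\varepsilon\mathbf{1}_n$ for all $j\in\mathcal{M}(t_k)$ ($\mathbf{1}_n$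 the vector of ones, inequalities componentwise). *)

From HB Require Import structures.
From mathcomp Require Import all_boot all_order all_algebra.
From mathcomp Require Import all_classical all_reals all_analysis.
Set Implicit Arguments. Unset Strict Implicit. Unset Printing Implicit Defensive.
Import Order.TTheory GRing.Theory Num.Theory.
Import numFieldNormedType.Exports.
Local Open Scope classical_set_scope.
Local Open Scope ring_scope.

Section Defs.
Variable R : realType.

Definition ext_class_K (alpha : R -> R) : Prop :=
  continuous alpha /\ (forall a b, a < b -> alpha a < alpha b) /\ alpha 0 = 0.

(* local Lipschitz continuity (w.r.t. the max-entry matrix norm) *)
Definition locally_lipschitz (r c k l : nat) (f : 'M[R]_(r, c) -> 'M[R]_(k, l)) :=
  forall x0, exists2 d : R, 0 < d & exists L : R, forall y z,
    `|y - x0| < d -> `|z - x0| < d -> `|f y - f z| <= L * `|y - z|.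

Definition grad (n : nat) (h : 'cV[R]_n -> R) (x : 'cV[R]_n) : 'rV[R]_n :=
  \row_i ('D_(delta_mx i 0) h x).

Definition regressor (n p m : nat) (F : 'cV[R]_n -> 'M[R]_(n, p))
  (G : 'cV[R]_n -> 'M[R]_(n, m)) (x : 'cV[R]_n) (u : 'cV[R]_m)
  : 'M[R]_(n, p + m) := row_mx (F x) (G x *m diag_mx u^T).

Definition Lf (n : nat) (h : 'cV[R]_n -> R) (f : 'cV[R]_n -> 'cV[R]_n) x : R :=
  (grad h x *m f x) 0 0.
Definition Lg (n m : nat) (h : 'cV[R]_n -> R) (g : 'cV[R]_n -> 'M[R]_(n, m)) x
  : 'rV[R]_m := grad h x *m g x.
Definition hdot (n p m : nat) (h : 'cV[R]_n -> R) (f : 'cV[R]_n -> 'cV[R]_n)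
  (g : 'cV[R]_n -> 'M[R]_(n, m)) (F : 'cV[R]_n -> 'M[R]_(n, p))
  (G : 'cV[R]_n -> 'M[R]_(n, m)) (x : 'cV[R]_n) (u : 'cV[R]_m)
  (th : 'cV[R]_(p + m)) : R :=
  Lf h f x + (grad h x *m g x *m u) 0 0 + (grad h x *m regressor F G x u *m th) 0 0.

Definition hrect (q : nat) (lo hi : 'cV[R]_q) : set 'cV[R]_q :=
  [set th | forall i, lo i 0 <= th i 0 <= hi i 0].

Definition mxint (r c : nat) (a b : R) (S : R -> 'M[R]_(r, c)) : 'M[R]_(r, c) :=
  \matrix_(i, j) (\int[lebesgue_measure]_(s in `[a, b]) S s i j).

(* smallest box containing A: componentwise min/max (as inf/sup in \bar R;
   they are attained when A is nonempty and compact; empty A gives empty box) *)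
Definition bbox (q : nat) (A : set 'cV[R]_q) : set 'cV[R]_q :=
  [set th | forall i, (ereal_inf [set (t i 0)%:E | t in A] <= (th i 0)%:E)%E /\
                      ((th i 0)%:E <= ereal_sup [set (t i 0)%:E | t in A])%E].

Section Scheme.
Variables (n p m : nat) (f : 'cV[R]_n -> 'cV[R]_n) (g : 'cV[R]_n -> 'M[R]_(n, m))
  (F : 'cV[R]_n -> 'M[R]_(n, p)) (G : 'cV[R]_n -> 'M[R]_(n, m))
  (x : R -> 'cV[R]_n) (u : R -> 'cV[R]_m) (dt eps : R)
  (tk : nat -> R) (stack : R -> seq R) (Theta : set 'cV[R]_(p + m)).

Definition DeltaX (t : R) : 'cV[R]_n := mxint (t - dt) t (fun s => 'D_1 x s).
Definition IntF (t : R) : 'cV[R]_n := mxint (t - dt) t (fun s => f (x s)).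
Definition IntG (t : R) : 'cV[R]_n := mxint (t - dt) t (fun s => g (x s) *m u s).
Definition IntS (t : R) : 'M[R]_(n, p + m) :=
  mxint (t - dt) t (fun s => regressor F G (x s) (u s)).

Definition consistent (k : nat) : set 'cV[R]_(p + m) :=
  [set th | forall s, s \in stack (tk k) -> forall i,
     - eps <= (DeltaX s - IntF s - IntG s - IntS s *m th) i 0 <= eps].

Fixpoint Xi (k : nat) : set 'cV[R]_(p + m) :=
  match k with
  | 0 => Theta
  | k'.+1 => bbox (Xi k' `&` consistent k'.+1)
  end.
End Scheme.

End Defs.

From HB Require Import structures.
From mathcomp Require Import all_boot all_order all_algebra.
From mathcomp Require Import all_classical all_reals all_analysis.
Import Order.TTheory GRing.Theory Num.Theory.
Import numFieldNormedType.Exports.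
Local Open Scope classical_set_scope.
Local Open Scope ring_scope.

(* Whatever the recorded data, every identified set Xi_k lies inside the
   prior box Theta: each update intersects with the previous set and then
   takes a bounding box, which cannot leave a box.  Shrinking the parameter
   set can only raise the worst case inf_theta hdot, so the robust CBF
   condition assumed on Theta is inherited by every Xi_k. *)

Section SetMembership.
Variable R : realType.

Lemma bbox_sub_hrect (q : nat) (lo hi : 'cV[R]_q) (A : set 'cV[R]_q) :
  A `<=` hrect lo hi -> bbox A `<=` hrect lo hi.
Proof.
move=> sub_A th bbox_th i.
have [inf_le le_sup] := bbox_th i.
have lo_le : ((lo i 0)%:E <= (th i 0)%:E)%E.
  apply: le_trans inf_le; apply: le_ereal_inf_tmp => _ [t At <-].
  by rewrite lee_fin; case/andP: (sub_A t At i).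
have le_hi : ((th i 0)%:E <= (hi i 0)%:E)%E.
  apply: le_trans le_sup _; apply: ge_ereal_sup => _ [t At <-].
  by rewrite lee_fin; case/andP: (sub_A t At i).
by rewrite -!lee_fin lo_le le_hi.
Qed.

Lemma Xi_sub_hrect (n p m : nat)
  (f : 'cV[R]_n -> 'cV[R]_n) (g : 'cV[R]_n -> 'M[R]_(n, m))
  (F : 'cV[R]_n -> 'M[R]_(n, p)) (G : 'cV[R]_n -> 'M[R]_(n, m))
  (lo hi : 'cV[R]_(p + m)) (x : R -> 'cV[R]_n) (u : R -> 'cV[R]_m)
  (dt eps : R) (tk : nat -> R) (stack : R -> seq R) (k : nat) :
  Xi f g F G x u dt eps tk stack (hrect lo hi) k `<=` hrect lo hi.
Proof.
elim: k => [//|k IHk] /=.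
by apply: bbox_sub_hrect; apply: subset_trans IHk; apply: subIsetl.
Qed.

Lemma le_ereal_sup_inf_subset (V T : Type) (U : set V) (A B : set T)
  (phi : V -> T -> R) : A `<=` B ->
  (ereal_sup [set ereal_inf [set (phi v t)%:E | t in B] | v in U] <=
   ereal_sup [set ereal_inf [set (phi v t)%:E | t in A] | v in U])%E.
Proof.
move=> AB; apply: ge_ereal_sup => _ [v Uv <-].
apply: le_trans (ereal_sup_ubound _); last by exists v.
by apply: le_ereal_inf => _ [t At <-]; exists t => //; apply: AB.
Qed.

End SetMembership.

Theorem proposition1 (R : realType) (n p m : nat)
  (f : 'cV[R]_n -> 'cV[R]_n) (g : 'cV[R]_n -> 'M[R]_(n, m))
  (F : 'cV[R]_n -> 'M[R]_(n, p)) (G : 'cV[R]_n -> 'M[R]_(n, m))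
  (U : set 'cV[R]_m) (lo hi theta : 'cV[R]_(p + m))
  (x : R -> 'cV[R]_n) (u : R -> 'cV[R]_m) (dt eps : R)
  (tk : nat -> R) (stack : R -> seq R)
  (h : 'cV[R]_n -> R) (alpha : R -> R) :
  locally_lipschitz f -> locally_lipschitz g ->
  (* unknown true parameter in the known hyperrectangle Theta *)
  hrect lo hi theta ->
  (* x is a solution of the uncertain system under the input signal u *)
  (forall t : R, 0 <= t -> U (u t)) ->
  (forall t : R, 0 < t -> is_derive t 1 x
      (f (x t) + g (x t) *m u t + regressor F G (x t) (u t) *m theta)) ->
  (* identification scheme data *)
  0 < dt -> 0 < eps ->
  tk 0%N = 0 -> (forall k, tk k < tk k.+1) ->
  (forall (t s : R), s \in stack t -> dt <= s <= t) ->
  (* h continuously differentiable, alpha extended class K *)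
  (forall y, differentiable h y) -> continuous (grad h) ->
  ext_class_K alpha ->
  (forall y, 0 <= h y ->
     (ereal_sup [set ereal_inf [set (hdot h f g F G y v th)%:E | th in hrect lo hi]
                | v in U] >= (- alpha (h y))%:E)%E) ->
  forall (k : nat) (y : 'cV[R]_n), 0 <= h y ->
    (ereal_sup [set ereal_inf [set (hdot h f g F G y v th)%:E
                              | th in Xi f g F G x u dt eps tk stack (hrect lo hi) k]
                | v in U] >= (- alpha (h y))%:E)%E.
Proof.
move=> _ _ _ _ _ _ _ _ _ _ _ _ _ cbf_Theta k y hy.
apply: le_trans (cbf_Theta y hy) _.
exact/le_ereal_sup_inf_subset/Xi_sub_hrect.
Qed.
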